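(* Let $\alpha\ge1$, let $B\le B_a$ be positive integers, let $\ell,I$ be integers with $0\le\ell\le B_a$ and $I\ge\ell$, and let $(w_k)_{k\le I}$ be reals with $w_k=0$ for $k\le0$ and $0\le w_1\le\cdots\le w_I$. With $\phi_i,\psi_i,\Omega$ as in the context, let $\Psi:=\sum_{i=I-\ell+1}^{I}\psi_i$ and $$\tau:=1+\frac{1}{E^{\alpha}-1}\cdot\frac{1}{\alpha_B}\left(E^{\alpha}-\frac{E^{\alpha}-1}{\alpha_{B_a}}\right).$$ Then $$\sum_{i=I-B_a+1}^{I-\ell}\phi_i w_i+\sum_{i=I-\ell+1}^{I}\psi_i w_i+w_{I-B_a}\,\Omega\ \le\ M\sum_{i=I-B_a+1}^{I}w_i,$$ where $M:=\max\{\tau,\Psi/\ell\}$ if $\ell\ge1$ and $M:=\tau$ if $\ell=0$.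
   Context: Notation: $E:=(1+1/B_a)^{B_a}$, $c:=\frac{E^{\alpha/B_a}-1}{E^{\alpha}-1}$, $e_B:=(1+1/B)^B$, $\alpha_B:=B(e_B^{\alpha/B}-1)$, $\alpha_{B_a}:=B_a(E^{\alpha/B_a}-1)$. The coefficients are $\phi_i:=(B_a-\ell)\,c\,E^{\alpha(I-i)/B_a}+\frac{1}{\alpha_B}\cdot\frac{E^{\alpha}-E^{\alpha(I-\ell-i)/B_a}}{E^{\alpha}-1}$, $\psi_i:=1+(B_a-\ell)\,c\,E^{\alpha(I-i)/B_a}$, and $\Omega:=\frac{1}{\alpha_B}\cdot\frac{1}{E^{\alpha}-1}\left(\ell E^{\alpha}-\frac{E^{\alpha}-E^{\alpha(B_a-\ell)/B_a}}{E^{\alpha/B_a}-1}\right)$. *)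

From Stdlib Require Import Reals ZArith List.
Open Scope R_scope.

(* sumZ a b f = \sum_{i=a}^{b} f i over integers (empty, = 0, if b < a). *)
Definition sumZ (a b : Z) (f : Z -> R) : R :=
  fold_right Rplus 0
    (map (fun j : nat => f (a + Z.of_nat j)%Z) (seq 0 (Z.to_nat (b - a + 1)))).

Definition eB (B : nat) : R := (1 + 1 / INR B) ^ B.
Definition EE (Ba : nat) : R := eB Ba.

Definition alphaB (alpha : R) (B : nat) : R :=
  INR B * (Rpower (eB B) (alpha / INR B) - 1).

Definition cc (alpha : R) (Ba : nat) : R :=
  (Rpower (EE Ba) (alpha / INR Ba) - 1) / (Rpower (EE Ba) alpha - 1).

Definition phi (alpha : R) (B Ba l : nat) (I i : Z) : R :=
  (INR Ba - INR l) * cc alpha Ba * Rpower (EE Ba) (alpha * IZR (I - i) / INR Ba)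
  + (1 / alphaB alpha B) *
    ((Rpower (EE Ba) alpha
      - Rpower (EE Ba) (alpha * IZR (I - Z.of_nat l - i) / INR Ba))
     / (Rpower (EE Ba) alpha - 1)).

Definition psi (alpha : R) (Ba l : nat) (I i : Z) : R :=
  1 + (INR Ba - INR l) * cc alpha Ba * Rpower (EE Ba) (alpha * IZR (I - i) / INR Ba).

Definition Omega (alpha : R) (B Ba l : nat) : R :=
  (1 / alphaB alpha B) * (1 / (Rpower (EE Ba) alpha - 1)) *
  (INR l * Rpower (EE Ba) alpha
   - (Rpower (EE Ba) alpha - Rpower (EE Ba) (alpha * (INR Ba - INR l) / INR Ba))
     / (Rpower (EE Ba) (alpha / INR Ba) - 1)).

Definition tau (alpha : R) (B Ba : nat) : R :=
  1 + (1 / (Rpower (EE Ba) alpha - 1)) * (1 / alphaB alpha B) *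
      (Rpower (EE Ba) alpha - (Rpower (EE Ba) alpha - 1) / alphaB alpha Ba).

Definition Psi (alpha : R) (Ba l : nat) (I : Z) : R :=
  sumZ (I - Z.of_nat l + 1) I (psi alpha Ba l I).

Definition Mconst (alpha : R) (B Ba l : nat) (I : Z) : R :=
  match l with
  | O => tau alpha B Ba
  | _ => Rmax (tau alpha B Ba) (Psi alpha Ba l I / INR l)
  end.

From Stdlib Require Import Reals ZArith List Lra Lia Psatz.
Open Scope R_scope.

(* Write q := E^(alpha/Ba) > 1, so that every power of E occurring in phi,
   psi, Omega and tau is an integral power of q, and read the sums downwards
   from index I: with v_j := w_(I-j) (nonincreasing in j, nonnegative) the
   left-hand side becomes  sum_(j<Ba) a_j v_j + Omega v_Ba,  where a_j = psi
   for j < l and a_j = phi afterwards, and the right-hand side is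
   M sum_(j<Ba) v_j.  By summation by parts (abel_bound) it suffices that
   every partial sum a_0 + ... + a_(n-1) is at most M n and that the full sum
   plus Omega is at most M Ba.  The latter is an exact identity: the full sum
   plus Omega equals tau Ba (coef_total).  For the psi-block the partial sums
   are controlled by the average Psi/l of the increasing psi's; on the
   phi-block the phi's are affine in q^k, so they either increase (and the
   total bound controls all prefixes) or each stays below tau. *)

Fixpoint psum (f : nat -> R) (n : nat) : R :=
  match n with O => 0 | S k => psum f k + f k end.

Lemma psum_ext (f g : nat -> R) (n : nat) :
  (forall j, (j < n)%nat -> f j = g j) -> psum f n = psum g n.
Proof.
  induction n as [|n IH]; intros Hfg; simpl; auto.
  rewrite IH, Hfg; auto.
Qed.

Lemma psum_shift (h : nat -> R) (n : nat) :
  psum h (S n) = h O + psum (fun j => h (S j)) n.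
Proof. induction n as [|n IH]; simpl in *; lra. Qed.

Lemma psum_add_range (h : nat -> R) (p k : nat) :
  psum h (p + k) = psum h p + psum (fun j => h (p + j)%nat) k.
Proof.
  induction k as [|k IH]; simpl.
  - rewrite Nat.add_0_r; lra.
  - rewrite Nat.add_succ_r; simpl. rewrite IH. lra.
Qed.

Lemma psum_affine (f : nat -> R) (x y : R) (n : nat) :
  psum (fun j => x * f j + y) n = x * psum f n + y * INR n.
Proof.
  induction n as [|n IH]; simpl psum; [simpl; lra|].
  rewrite IH, S_INR. lra.
Qed.

Lemma psum_le_const (h : nat -> R) (C : R) (n : nat) :
  (forall j, (j < n)%nat -> h j <= C) -> psum h n <= C * INR n.
Proof.
  induction n as [|n IH]; intros Hh; simpl psum; [simpl; lra|].
  rewrite S_INR.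
  assert (h n <= C) by (apply Hh; lia).
  assert (psum h n <= C * INR n) by (apply IH; intros; apply Hh; lia).
  lra.
Qed.

Lemma psum_rev (h : nat -> R) (n : nat) :
  psum h n = psum (fun j => h (n - 1 - j)%nat) n.
Proof.
  induction n as [|n IH]; auto.
  rewrite (psum_shift (fun j => h (S n - 1 - j)%nat)). simpl psum at 1. rewrite IH.
  replace (S n - 1 - 0)%nat with n by lia. rewrite Rplus_comm. f_equal.
  apply psum_ext. intros; f_equal; lia.
Qed.

Lemma psum_geom (q : R) (n : nat) : q <> 1 -> psum (pow q) n = (q ^ n - 1) / (q - 1).
Proof.
  intros Hq. induction n as [|n IH]; simpl psum; [simpl; field; lra|].
  rewrite IH. simpl pow. field. lra.
Qed.

Lemma fold_right_psum (g : nat -> R) (s n : nat) :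
  fold_right Rplus 0 (map g (seq s n)) = psum (fun j => g (s + j)%nat) n.
Proof.
  revert s; induction n as [|n IH]; intros s; auto.
  simpl seq; simpl map; simpl fold_right. rewrite psum_shift, IH, Nat.add_0_r. f_equal.
  apply psum_ext. intros; f_equal; lia.
Qed.

Lemma sumZ_as_psum (a b : Z) (f : Z -> R) (n : nat) : (b - a + 1 = Z.of_nat n)%Z ->
  sumZ a b f = psum (fun j => f (b - Z.of_nat j)%Z) n.
Proof.
  intros Hn. unfold sumZ. rewrite Hn, Nat2Z.id, fold_right_psum, psum_rev.
  apply psum_ext. intros j Hj. f_equal. lia.
Qed.

Lemma psum_avg (h : nat -> R) (n L : nat) :
  Un_growing h -> (n <= L)%nat -> INR L * psum h n <= INR n * psum h L.
Proof.
  intros Hh HnL. replace L with (n + (L - n))%nat by lia. generalize (L - n)%nat as k.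
  clear L HnL. induction k as [|k IH]; [rewrite Nat.add_0_r; lra|].
  rewrite Nat.add_succ_r. simpl psum. rewrite S_INR.
  assert (psum h n <= h (n + k)%nat * INR n).
  { apply psum_le_const. intros j Hj. apply Rge_le, growing_prop; auto; lia. }
  nra.
Qed.

Lemma growing_prefix_nonpos (h : nat -> R) (D : R) (n N : nat) :
  Un_growing h -> (n <= N)%nat -> D <= 0 -> D + psum h N <= 0 -> D + psum h n <= 0.
Proof.
  intros Hh HnN HD HDN.
  pose proof (psum_avg h n N Hh HnN) as Havg.
  assert (HnR : INR n <= INR N) by (apply le_INR; auto).
  assert (0 <= INR n) by apply pos_INR.
  destruct (Nat.eq_dec N 0) as [->|HN0].
  - replace n with O by lia. simpl. lra.
  - assert (0 < INR N) by (apply lt_0_INR; lia). nra.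
Qed.

Corollary growing_prefix_bound (h : nat -> R) (C : R) (n N : nat) :
  Un_growing h -> (n <= N)%nat -> psum h N <= C * INR N -> psum h n <= C * INR n.
Proof.
  intros Hh HnN HN.
  assert (Hshift : forall k, psum (fun j => 1 * h j + - C) k = psum h k - C * INR k)
    by (intros k; rewrite psum_affine; ring).
  pose proof (growing_prefix_nonpos (fun j => 1 * h j + - C) 0 n N) as Hp.
  rewrite !Hshift in Hp.
  enough (0 + (psum h n - C * INR n) <= 0) by lra.
  apply Hp; auto; try lra.
  intros j. pose proof (Hh j). lra.
Qed.

(* Summation by parts: weighting a sequence whose partial sums are at most M per
   term by a nonincreasing nonnegative weight v keeps the bound; a final
   surplus O on the last partial sum is paid with the last weight v m. *)
Lemma abel_bound (a v : nat -> R) (M O : R) (m : nat) :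
  Un_decreasing v -> 0 <= v m ->
  (forall n, (n <= m)%nat -> psum a n <= M * INR n) -> psum a m + O <= M * INR m ->
  psum (fun j => a j * v j) m + O * v m <= M * psum v m.
Proof.
  intros Hv Hvm Hpart Htot.
  assert (Hinv : forall n, (n <= m)%nat ->
    psum (fun j => a j * v j) n - M * psum v n <= (psum a n - M * INR n) * v n).
  { induction n as [|n IH]; intros Hn; [simpl; lra|].
    simpl psum. rewrite S_INR.
    specialize (IH ltac:(lia)). specialize (Hpart (S n) Hn). simpl psum in Hpart.
    rewrite S_INR in Hpart. specialize (Hv n). nra. }
  specialize (Hinv m (le_n _)). nra.
Qed.

(* The coefficient sequence over an abstract ratio q > 1, with m = Ba terms of
   which the first l are psi's, and Kb = 1/alpha_B.  Indices count downwards
   from I: psi_seq j is psi_(I-j) and phi_seq k is phi_(I-l-k).  The hypothesis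
   m (q - 1) >= 1 is alpha_(Ba) >= 1. *)
Section Coefficients.

Variables (m l : nat) (q Kb : R).
Hypothesis Hlm : (l <= m)%nat.
Hypothesis Hq : 1 < q.
Hypothesis HKb : 0 < Kb <= 1.
Hypothesis Hmq : 1 <= INR m * (q - 1).

(* growth = (Ba - l) c, the common factor of the geometric parts. *)
Definition growth : R := (INR m - INR l) * ((q - 1) / (q ^ m - 1)).
Definition psi_seq (j : nat) : R := 1 + growth * q ^ j.
Definition phi_seq (k : nat) : R :=
  growth * q ^ (l + k) + Kb * ((q ^ m - q ^ k) / (q ^ m - 1)).
Definition coef (j : nat) : R := if (j <? l)%nat then psi_seq j else phi_seq (j - l).
Definition tau_q : R :=
  1 + (1 / (q ^ m - 1)) * Kb * (q ^ m - (q ^ m - 1) / (INR m * (q - 1))).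
Definition Omega_q : R :=
  Kb * (1 / (q ^ m - 1)) * (INR l * q ^ m - (q ^ m - q ^ (m - l)) / (q - 1)).
(* The coefficient of q^k once phi_seq k is written as an affine function of q^k. *)
Definition phi_slope : R := growth * q ^ l - Kb / (q ^ m - 1).

Lemma m_pos : (0 < m)%nat.
Proof. destruct m; [simpl in Hmq; lra | lia]. Qed.

Lemma qm_gt1 : 1 < q ^ m.
Proof. apply Rlt_pow_R1; [lra | apply m_pos]. Qed.

Lemma growth_nonneg : 0 <= growth.
Proof.
  pose proof qm_gt1. assert (INR l <= INR m) by (apply le_INR; auto).
  unfold growth. apply Rmult_le_pos; [lra|]. apply Rlt_le, Rdiv_lt_0_compat; lra.
Qed.

Lemma psi_seq_growing : Un_growing psi_seq.
Proof.
  intros j. unfold psi_seq. rewrite <- tech_pow_Rmult.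
  pose proof growth_nonneg. assert (1 <= q ^ j) by (apply pow_R1_Rle; lra).
  assert (0 <= growth * q ^ j * (q - 1)) by (apply Rmult_le_pos; [apply Rmult_le_pos|]; lra).
  lra.
Qed.

Lemma phi_seq_affine (k : nat) :
  phi_seq k = q ^ k * phi_slope + Kb / (q ^ m - 1) * q ^ m.
Proof.
  pose proof qm_gt1. unfold phi_seq, phi_slope. rewrite pow_add. field. lra.
Qed.

Lemma psum_psi_seq (n : nat) : psum psi_seq n = INR n + growth * ((q ^ n - 1) / (q - 1)).
Proof.
  rewrite <- psum_geom by lra.
  replace (INR n + growth * psum (pow q) n) with (growth * psum (pow q) n + 1 * INR n) by ring.
  rewrite <- psum_affine. apply psum_ext. intros; unfold psi_seq; ring.
Qed.

Lemma psum_phi_seq (k : nat) :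
  psum phi_seq k = phi_slope * ((q ^ k - 1) / (q - 1)) + Kb / (q ^ m - 1) * q ^ m * INR k.
Proof.
  rewrite <- psum_geom by lra. rewrite <- psum_affine.
  apply psum_ext. intros; rewrite phi_seq_affine; ring.
Qed.

Lemma coef_psum_prefix (n : nat) : (n <= l)%nat -> psum coef n = psum psi_seq n.
Proof.
  intros Hn. apply psum_ext. intros j Hj. unfold coef.
  replace (j <? l)%nat with true by (symmetry; apply Nat.ltb_lt; lia). reflexivity.
Qed.

Lemma coef_psum_split (k : nat) : psum coef (l + k) = psum psi_seq l + psum phi_seq k.
Proof.
  rewrite psum_add_range, coef_psum_prefix by lia. f_equal.
  apply psum_ext. intros j Hj. unfold coef.
  replace (l + j <? l)%nat with false by (symmetry; apply Nat.ltb_ge; lia).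
  f_equal; lia.
Qed.

Lemma coef_total : psum coef m + Omega_q = tau_q * INR m.
Proof.
  pose proof qm_gt1 as Hr.
  assert (Hm0 : INR m <> 0) by (apply not_0_INR; pose proof m_pos; lia).
  replace m with (l + (m - l))%nat at 1 by lia.
  rewrite coef_psum_split, psum_psi_seq, psum_phi_seq.
  unfold Omega_q, tau_q, phi_slope, growth.
  assert (Hsplit : q ^ m = q ^ l * q ^ (m - l)) by (rewrite <- pow_add; f_equal; lia).
  rewrite Hsplit in *.
  replace (INR m) with (INR l + INR (m - l)) in * by (rewrite minus_INR; auto; ring).
  replace (INR l + INR (m - l) - INR l) with (INR (m - l)) by ring.
  field. repeat split; lra.
Qed.

(* Omega >= 0, since q^m - q^(m-l) = q^(m-l)(q^l - 1) <= l q^m (q - 1). *)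
Lemma Omega_q_nonneg : 0 <= Omega_q.
Proof.
  pose proof qm_gt1 as Hr.
  unfold Omega_q. apply Rmult_le_pos; [apply Rmult_le_pos; [lra|]|].
  { apply Rlt_le, Rdiv_lt_0_compat; lra. }
  assert (Hgl : psum (pow q) l <= q ^ l * INR l)
    by (apply psum_le_const; intros; apply Rle_pow; [lra|lia]).
  rewrite psum_geom in Hgl by lra.
  assert (1 <= q ^ (m - l)) by (apply pow_R1_Rle; lra).
  replace (q ^ m) with (q ^ (m - l) * q ^ l) by (rewrite <- pow_add; f_equal; lia).
  replace (q ^ (m - l) * q ^ l - q ^ (m - l)) with (q ^ (m - l) * (q ^ l - 1)) by ring.
  unfold Rdiv in *. rewrite Rmult_assoc. nra.
Qed.

(* tau dominates the constant part of the phi-coefficients, because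
   Kb <= 1 <= m (q - 1). *)
Lemma tau_q_ge_const : Kb / (q ^ m - 1) * q ^ m <= tau_q.
Proof.
  pose proof qm_gt1.
  assert (Hinv : 0 < / (INR m * (q - 1)) <= 1).
  { split; [apply Rinv_0_lt_compat; lra|]. rewrite <- Rinv_1. apply Rinv_le_contravar; lra. }
  assert (Kb / (INR m * (q - 1)) <= 1) by (unfold Rdiv; nra).
  replace tau_q with (1 + Kb / (q ^ m - 1) * q ^ m - Kb / (INR m * (q - 1))); [lra|].
  assert (INR m <> 0) by (apply not_0_INR; pose proof m_pos; lia).
  unfold tau_q. field. repeat split; lra.
Qed.

(* The two constraints defining M: tau <= M and, when l > 0, Psi/l <= M. *)
Variable M : R.
Hypothesis HtauM : tau_q <= M.
Hypothesis HpsiM : (0 < l)%nat -> psum psi_seq l / INR l <= M.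

(* On the psi-block the increasing psi's have prefix averages below Psi/l. *)
Lemma coef_prefix_bound (n : nat) : (n <= l)%nat -> psum coef n <= M * INR n.
Proof.
  intros Hn. rewrite coef_psum_prefix by auto.
  apply growing_prefix_bound with l; auto using psi_seq_growing.
  destruct l as [|l']; [simpl; lra|].
  assert (0 < INR (S l')) by (apply lt_0_INR; lia).
  specialize (HpsiM ltac:(lia)). apply (Rmult_le_compat_r (INR (S l'))) in HpsiM; [|lra].
  unfold Rdiv in HpsiM. rewrite Rmult_assoc, Rinv_l in HpsiM by lra. lra.
Qed.

Lemma coef_total_bound : psum coef m + Omega_q <= M * INR m.
Proof.
  rewrite coef_total. apply Rmult_le_compat_r; [apply pos_INR | auto].
Qed.

(* Past the psi-block, the deficit accumulated on the psi-block absorbs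
   every prefix of the phi-block: either the phi-coefficients increase (and
   the full sum controls the prefixes), or each of them is below M. *)
Lemma coef_tail_bound (k : nat) : (k <= m - l)%nat -> psum coef (l + k) <= M * INR (l + k).
Proof.
  intros Hk. rewrite coef_psum_split, plus_INR.
  assert (HD : psum psi_seq l - M * INR l <= 0).
  { pose proof (coef_prefix_bound l (le_n _)). rewrite coef_psum_prefix in H by lia. lra. }
  assert (Hshift : forall n, psum (fun j => 1 * phi_seq j + - M) n = psum phi_seq n - M * INR n)
    by (intros n; rewrite psum_affine; ring).
  destruct (Rle_lt_dec 0 phi_slope) as [Hslope|Hslope].
  - assert (Hgrow : Un_growing (fun j => 1 * phi_seq j + - M)).
    { intros j. rewrite !phi_seq_affine, <- tech_pow_Rmult.
      assert (1 <= q ^ j) by (apply pow_R1_Rle; lra).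
      assert (0 <= q ^ j * (q - 1) * phi_slope) by (apply Rmult_le_pos; [apply Rmult_le_pos|]; lra).
      lra. }
    assert (Hfull : psum psi_seq l - M * INR l + psum (fun j => 1 * phi_seq j + - M) (m - l) <= 0).
    { pose proof coef_total_bound. pose proof Omega_q_nonneg.
      replace m with (l + (m - l))%nat in H by lia.
      rewrite coef_psum_split, plus_INR in H. rewrite Hshift. lra. }
    pose proof (growing_prefix_nonpos _ _ k (m - l) Hgrow Hk HD Hfull). rewrite Hshift in H. lra.
  - assert (psum phi_seq k <= M * INR k).
    { apply psum_le_const. intros j _. rewrite phi_seq_affine.
      pose proof tau_q_ge_const. assert (1 <= q ^ j) by (apply pow_R1_Rle; lra). nra. }
    lra.
Qed.

Lemma coef_partial_bound (n : nat) : (n <= m)%nat -> psum coef n <= M * INR n.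
Proof.
  intros Hn. destruct (le_lt_dec n l) as [Hnl|Hnl]; [auto using coef_prefix_bound|].
  replace n with (l + (n - l))%nat by lia. apply coef_tail_bound. lia.
Qed.

End Coefficients.

(* The ratio q := E^(alpha/Ba); every power of E occurring in phi, psi,
   Omega and tau is an integral power of q. *)
Definition qE (alpha : R) (Ba : nat) : R := Rpower (EE Ba) (alpha / INR Ba).

Lemma EE_gt1 (Ba : nat) : (0 < Ba)%nat -> 1 < EE Ba.
Proof.
  intros HBa. unfold EE, eB. apply Rlt_pow_R1; [|lia].
  assert (0 < 1 / INR Ba) by (apply Rdiv_lt_0_compat; [lra | apply lt_0_INR; lia]).
  lra.
Qed.

Lemma Rpower_EE_nat (alpha : R) (Ba j : nat) : (0 < Ba)%nat ->
  Rpower (EE Ba) (alpha * INR j / INR Ba) = qE alpha Ba ^ j.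
Proof.
  intros HBa. pose proof (EE_gt1 Ba HBa).
  assert (INR Ba <> 0) by (apply not_0_INR; lia).
  unfold qE. rewrite <- Rpower_pow by (apply exp_pos). rewrite Rpower_mult.
  f_equal. field. auto.
Qed.

Lemma Rpower_EE_alpha (alpha : R) (Ba : nat) : (0 < Ba)%nat ->
  Rpower (EE Ba) alpha = qE alpha Ba ^ Ba.
Proof.
  intros HBa. rewrite <- Rpower_EE_nat by auto. f_equal.
  assert (INR Ba <> 0) by (apply not_0_INR; lia). field. auto.
Qed.

Lemma qE_gt1 (alpha : R) (Ba : nat) : 0 < alpha -> (0 < Ba)%nat -> 1 < qE alpha Ba.
Proof.
  intros Hal HBa. pose proof (EE_gt1 Ba HBa). unfold qE.
  rewrite <- (Rpower_O (EE Ba)) by lra. apply Rpower_lt; auto.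
  apply Rdiv_lt_0_compat; [lra | apply lt_0_INR; lia].
Qed.

(* alpha_B >= 1 for alpha >= 1, since e_B^(alpha/B) = (1 + 1/B)^alpha >= 1 + 1/B. *)
Lemma alphaB_ge1 (alpha : R) (B : nat) : 1 <= alpha -> (0 < B)%nat -> 1 <= alphaB alpha B.
Proof.
  intros Hal HB. unfold alphaB.
  assert (HBr : 0 < INR B) by (apply lt_0_INR; auto).
  assert (Hinv : 0 < 1 / INR B) by (apply Rdiv_lt_0_compat; lra).
  assert (Hbase : Rpower (eB B) (alpha / INR B) = Rpower (1 + 1 / INR B) alpha).
  { unfold eB. rewrite <- Rpower_pow by lra. rewrite Rpower_mult. f_equal. field. lra. }
  assert (1 + 1 / INR B <= Rpower (eB B) (alpha / INR B)).
  { rewrite Hbase. rewrite <- (Rpower_1 (1 + 1 / INR B)) at 1 by lra.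
    apply Rle_Rpower; lra. }
  apply Rle_trans with (INR B * (1 + 1 / INR B - 1)); [right; field; lra|].
  apply Rmult_le_compat_l; lra.
Qed.

(* The paper's quantities, read downwards from index I, are the abstract
   ones of the previous section with m = Ba, q = qE alpha Ba, Kb = 1/alpha_B. *)
Section Reindexing.

Variables (alpha : R) (B Ba l : nat) (I : Z).
Hypothesis HBa : (0 < Ba)%nat.

Let q : R := qE alpha Ba.
Let Kb : R := 1 / alphaB alpha B.

Lemma psi_reindex (j : nat) : psi alpha Ba l I (I - Z.of_nat j) = psi_seq Ba l q j.
Proof.
  unfold psi, psi_seq, growth, cc, q.
  change (Rpower (EE Ba) (alpha / INR Ba)) with (qE alpha Ba).
  replace (IZR (I - (I - Z.of_nat j))) with (INR j) by (rewrite INR_IZR_INZ; f_equal; lia).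
  rewrite Rpower_EE_alpha, Rpower_EE_nat by auto. reflexivity.
Qed.

Lemma phi_reindex (k : nat) :
  phi alpha B Ba l I (I - Z.of_nat l - Z.of_nat k) = phi_seq Ba l q Kb k.
Proof.
  unfold phi, phi_seq, growth, cc, Kb, q.
  change (Rpower (EE Ba) (alpha / INR Ba)) with (qE alpha Ba).
  rewrite Rpower_EE_alpha by auto.
  replace (IZR (I - (I - Z.of_nat l - Z.of_nat k))) with (INR (l + k))
    by (rewrite INR_IZR_INZ; f_equal; lia).
  replace (IZR (I - Z.of_nat l - (I - Z.of_nat l - Z.of_nat k))) with (INR k)
    by (rewrite INR_IZR_INZ; f_equal; lia).
  rewrite !Rpower_EE_nat by auto. reflexivity.
Qed.

Lemma Omega_reindex : (l <= Ba)%nat -> Omega alpha B Ba l = Omega_q Ba l q Kb.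
Proof.
  intros HlBa. unfold Omega, Omega_q, Kb, q.
  change (Rpower (EE Ba) (alpha / INR Ba)) with (qE alpha Ba).
  rewrite Rpower_EE_alpha, <- minus_INR, Rpower_EE_nat by auto. reflexivity.
Qed.

Lemma tau_reindex : tau alpha B Ba = tau_q Ba q Kb.
Proof. unfold tau, tau_q, Kb. rewrite Rpower_EE_alpha by auto. reflexivity. Qed.

Lemma Psi_reindex : (Z.of_nat l <= I)%Z -> Psi alpha Ba l I = psum (psi_seq Ba l q) l.
Proof.
  intros HlI. unfold Psi. rewrite (sumZ_as_psum _ _ _ l) by lia.
  apply psum_ext. intros; apply psi_reindex.
Qed.

Lemma weighted_sum_reindex (w : Z -> R) : (l <= Ba)%nat -> (Z.of_nat l <= I)%Z ->
  sumZ (I - Z.of_nat Ba + 1) (I - Z.of_nat l) (fun i => phi alpha B Ba l I i * w i)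
  + sumZ (I - Z.of_nat l + 1) I (fun i => psi alpha Ba l I i * w i)
  = psum (fun j => coef Ba l q Kb j * w (I - Z.of_nat j)%Z) Ba.
Proof.
  intros HlBa HlI.
  rewrite (sumZ_as_psum _ _ _ (Ba - l)), (sumZ_as_psum _ _ _ l) by lia.
  transitivity (psum (fun j => coef Ba l q Kb j * w (I - Z.of_nat j)%Z) (l + (Ba - l)));
    [| f_equal; lia].
  rewrite psum_add_range, Rplus_comm. f_equal.
  - apply psum_ext. intros j Hj. unfold coef.
    replace (j <? l)%nat with true by (symmetry; apply Nat.ltb_lt; auto).
    rewrite psi_reindex. reflexivity.
  - apply psum_ext. intros j Hj. unfold coef.
    replace (l + j <? l)%nat with false by (symmetry; apply Nat.ltb_ge; lia).
    replace (l + j - l)%nat with j by lia. rewrite <- phi_reindex.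
    replace (I - Z.of_nat (l + j))%Z with (I - Z.of_nat l - Z.of_nat j)%Z by lia. reflexivity.
Qed.

End Reindexing.

Lemma weights_nonneg (w : Z -> R) (I : Z) :
  (forall k : Z, (k <= 0)%Z -> w k = 0) ->
  (forall k : Z, (0 <= k)%Z -> (k < I)%Z -> w k <= w (k + 1)%Z) ->
  forall k, (k <= I)%Z -> 0 <= w k.
Proof.
  intros Hw0 Hwm.
  assert (Hnat : forall n, (Z.of_nat n <= I)%Z -> 0 <= w (Z.of_nat n)).
  { induction n as [|n IH]; intros Hn; [rewrite Hw0 by lia; lra|].
    rewrite Nat2Z.inj_succ. unfold Z.succ.
    specialize (Hwm (Z.of_nat n) ltac:(lia) ltac:(lia)). specialize (IH ltac:(lia)). lra. }
  intros k Hk. destruct (Z.le_gt_cases k 0); [rewrite Hw0 by auto; lra|].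
  replace k with (Z.of_nat (Z.to_nat k)) by lia. apply Hnat. lia.
Qed.

Lemma weights_rev_decreasing (w : Z -> R) (I : Z) :
  (forall k : Z, (k <= 0)%Z -> w k = 0) ->
  (forall k : Z, (0 <= k)%Z -> (k < I)%Z -> w k <= w (k + 1)%Z) ->
  Un_decreasing (fun j => w (I - Z.of_nat j)%Z).
Proof.
  intros Hw0 Hwm j. destruct (Z.le_gt_cases 0 (I - Z.of_nat (S j))%Z).
  - replace (I - Z.of_nat j)%Z with (I - Z.of_nat (S j) + 1)%Z by lia. apply Hwm; lia.
  - rewrite Hw0, (Hw0 (I - Z.of_nat j)%Z) by lia. lra.
Qed.

Theorem lemmaA8 (alpha : R) (B Ba l : nat) (I : Z) (w : Z -> R) :
  1 <= alpha ->
  (0 < B)%nat -> (B <= Ba)%nat ->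
  (l <= Ba)%nat -> (Z.of_nat l <= I)%Z ->
  (forall k : Z, (k <= 0)%Z -> w k = 0) ->
  (forall k : Z, (0 <= k)%Z -> (k < I)%Z -> w k <= w (k + 1)%Z) ->
  sumZ (I - Z.of_nat Ba + 1) (I - Z.of_nat l) (fun i => phi alpha B Ba l I i * w i)
  + sumZ (I - Z.of_nat l + 1) I (fun i => psi alpha Ba l I i * w i)
  + w (I - Z.of_nat Ba)%Z * Omega alpha B Ba l
  <= Mconst alpha B Ba l I * sumZ (I - Z.of_nat Ba + 1) I w.
Proof.
  intros Hal HB HBBa HlBa HlI Hw0 Hwm.
  assert (HBa : (0 < Ba)%nat) by lia.
  set (q := qE alpha Ba). set (Kb := 1 / alphaB alpha B). set (M := Mconst alpha B Ba l I).
  assert (Hq : 1 < q) by (apply qE_gt1; [lra | auto]).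
  assert (HKb : 0 < Kb <= 1).
  { pose proof (alphaB_ge1 alpha B Hal HB). unfold Kb. split; [apply Rdiv_lt_0_compat; lra|].
    unfold Rdiv. rewrite Rmult_1_l, <- Rinv_1. apply Rinv_le_contravar; lra. }
  assert (Hmq : 1 <= INR Ba * (q - 1)) by (apply (alphaB_ge1 alpha Ba); auto).
  assert (HtauM : tau_q Ba q Kb <= M).
  { unfold M, Mconst, q, Kb. rewrite <- tau_reindex by auto. destruct l; [lra | apply Rmax_l]. }
  assert (HpsiM : (0 < l)%nat -> psum (psi_seq Ba l q) l / INR l <= M).
  { intros Hl. unfold M, q. rewrite <- (Psi_reindex alpha Ba l I) by auto.
    unfold Mconst. destruct l; [lia | apply Rmax_r]. }
  rewrite weighted_sum_reindex, Omega_reindex, (sumZ_as_psum _ _ w Ba) by (auto; lia).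
  rewrite Rmult_comm. fold q Kb.
  apply (abel_bound _ (fun j => w (I - Z.of_nat j)%Z) M _ Ba).
  - apply weights_rev_decreasing; auto.
  - apply (weights_nonneg w I); auto; lia.
  - apply coef_partial_bound; auto.
  - apply coef_total_bound; auto.
Qed.
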